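(* Let $R$ be an almost Dedekind domain. Then $\mathrm{Crit}(R)$ is a closed subset of $\mathcal{M}$.
   Context: $R$ almost Dedekind: $R_M$ is a DVR for every maximal $M$. $\mathcal{M}$ is $\mathrm{Max}(R)$ with the inverse topology (restriction of the coarsest topology on $\mathrm{Spec}(R)$ in which Zariski-open Zariski-compact sets are closed). A maximal ideal $M$ is critical if for every finitely generated ideal $I\subseteq M$ there is a maximal ideal $N$ with $I\subseteq N^2$; $\mathrm{Crit}(R)$ is the set of critical maximal ideals. *)

From HB Require Import structures.
From mathcomp Require Import all_boot all_algebra fraction.
From mathcomp Require Import boolp classical_sets.
Set Implicit Arguments. Unset Strict Implicit. Unset Printing Implicit Defensive.
Import GRing.Theory.
Local Open Scope ring_scope.
Local Open Scope classical_set_scope.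

(** * Ideals of a subring S of a commutative ring K (S = setT for K itself) *)
Section IdealsIn.
Variable K : comNzRingType.

Definition ideal_in (S J : set K) : Prop :=
  J `<=` S /\ J 0 /\ (forall x, J x -> J (- x)) /\
  (forall x y, J x -> J y -> J (x + y)) /\
  (forall s x, S s -> J x -> J (s * x)).

Definition prime_in (S P : set K) : Prop :=
  ideal_in S P /\ ~ P 1 /\
  (forall x y, S x -> S y -> P (x * y) -> P x \/ P y).

Definition maximal_in (S M : set K) : Prop :=
  ideal_in S M /\ ~ M 1 /\
  (forall J, ideal_in S J -> M `<=` J -> J = M \/ J = S).

Definition principal_in (S J : set K) : Prop :=
  exists x, J = [set y | exists2 s, S s & y = s * x].

(** S is a discrete valuation ring: a principal ideal domain with exactly one
    nonzero prime ideal (S is a subring of a field, hence a domain). *)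
Definition DVR (S : set K) : Prop :=
  (forall J, ideal_in S J -> principal_in S J) /\
  exists P, [/\ prime_in S P, P <> [set 0] &
    forall Q, prime_in S Q -> Q <> [set 0] -> Q = P].
End IdealsIn.

Section Ring.
Variable R : idomainType.

Definition is_maximal (M : set R) := maximal_in setT M.
Definition is_prime (P : set R) := prime_in setT P.

Definition gen_ideal (l : seq R) : set R :=
  [set x | exists c : nat -> R, x = \sum_(i < size l) c i * l`_i].

Definition fg_ideal (I : set R) : Prop := exists l : seq R, I = gen_ideal l.

Definition ideal_mul (I J : set R) : set R :=
  [set x | exists (n : nat) (a b : nat -> R),
     (forall i, I (a i) /\ J (b i)) /\ x = \sum_(i < n) a i * b i].

(** the localization R_M, as the subring {a/s | s \notin M} of Frac(R) *)
Definition localization (M : set R) : set {fraction R} :=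
  [set x | exists a s, ~ M s /\
     x = FracField.tofrac a / FracField.tofrac s].

Definition almost_dedekind : Prop :=
  forall M, is_maximal M -> DVR (localization M).

Definition critical (M : set R) : Prop :=
  is_maximal M /\
  forall I, fg_ideal I -> I `<=` M ->
    exists N, is_maximal N /\ I `<=` ideal_mul N N.

Definition Crit : set (set R) := [set M | critical M].
Definition Spec : set (set R) := [set P | is_prime P].
Definition Max : set (set R) := [set M | is_maximal M].

Definition zariski_open (U : set (set R)) : Prop :=
  exists A : set R, U = [set P | Spec P /\ ~ (A `<=` P)].

Definition zariski_compact (U : set (set R)) : Prop :=
  forall (I : Type) (F : I -> set (set R)),
    (forall i, zariski_open (F i)) -> U `<=` \bigcup_i F i ->
    exists (n : nat) (g : nat -> I),
      U `<=` [set P | exists k, (k < n)%N /\ F (g k) P].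
End Ring.

Inductive gen_open (T : Type) (X0 : set T) (B : set (set T)) : set T -> Prop :=
  | gen_basic U : B U -> gen_open X0 B U
  | gen_full : gen_open X0 B X0
  | gen_inter U V : gen_open X0 B U -> gen_open X0 B V -> gen_open X0 B (U `&` V)
  | gen_union (I : Type) (F : I -> set T) :
      (forall i, gen_open X0 B (F i)) -> gen_open X0 B (\bigcup_i F i).

Section Inverse.
Variable R : idomainType.

(** inverse topology on Spec(R): coarsest topology in which the Zariski-open
    Zariski-compact sets are closed, i.e. generated by their complements *)
Definition inverse_open (V : set (set R)) : Prop :=
  gen_open (@Spec R)
    [set W | exists U, [/\ U `<=` @Spec R, zariski_open U, zariski_compact U &
                          W = @Spec R `\` U]] V.

Definition inverse_closed (C : set (set R)) : Prop :=
  C `<=` @Spec R /\ inverse_open (@Spec R `\` C).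

(** closed subsets of \mathcal{M} = Max(R) with the subspace inverse topology *)
Definition closed_in_invMax (C : set (set R)) : Prop :=
  exists C', inverse_closed C' /\ C = @Max R `&` C'.
End Inverse.

From mathcomp Require Import all_boot all_algebra fraction.
From mathcomp Require Import boolp classical_sets ring.
Set Implicit Arguments. Unset Strict Implicit. Unset Printing Implicit Defensive.
Import GRing.Theory.
Local Open Scope ring_scope.
Local Open Scope classical_set_scope.

(* A maximal ideal M fails to be critical exactly when it contains a finitely
   generated ideal I that lies in no N^2 with N maximal, so Max \ Crit is the
   trace on Max of the union of the zero loci V(I) of such ideals I.  For
   I = (x_1, ..., x_k), V(I) is the complement in Spec of
   D(I) = D(x_1) u ... u D(x_k), which is quasi-compact: if D(a) is covered by
   basic opens D(A_j), then some power of a lies in the ideal generated by the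
   A_j (otherwise Zorn's lemma gives a prime containing every A_j but not a),
   and this power involves only finitely many A_j.  Hence every such V(I) is
   open in the inverse topology, and Crit is closed in Max. *)

Section Ideals.
Variable K : comNzRingType.
Local Notation ideal := (@ideal_in K setT).
Implicit Types (A P : set K) (x y a : K).

Lemma ideal0 A : ideal A -> A 0.
Proof. by move=> [_ []]. Qed.

Lemma idealD A x y : ideal A -> A x -> A y -> A (x + y).
Proof. by move=> [_ [_ [_ [AD _]]]]; apply: AD. Qed.

Lemma idealMl A x y : ideal A -> A y -> A (x * y).
Proof. by move=> [_ [_ [_ [_ AM]]]]; apply: AM. Qed.

Lemma idealMr A x y : ideal A -> A x -> A (x * y).
Proof. by rewrite mulrC; apply: idealMl. Qed.

Lemma ideal_sum A (I : Type) (r : seq I) (P : pred I) (F : I -> K) :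
  ideal A -> (forall i, P i -> A (F i)) -> A (\sum_(i <- r | P i) F i).
Proof.
by move=> iA AF; apply: (big_ind A) => //; [exact: ideal0 iA | move=> x y; exact: idealD].
Qed.

Lemma prime_expr_notin P a n : prime_in setT P -> ~ P a -> ~ P (a ^+ n).
Proof.
move=> [_ [P1 Pmul]] Pa; elim: n => [|n IHn]; first by rewrite expr0.
by rewrite exprS => /(Pmul _ _ I I) [].
Qed.

Definition adjoin A x : set K := [set z | exists m r, A m /\ z = m + r * x].

Lemma ideal_adjoin A x : ideal A -> ideal (adjoin A x).
Proof.
move=> [_ [A0 [AN [AD AM]]]]; split=> //.
split; first by exists 0, 0; rewrite mul0r addr0.
split.
  move=> _ [m [r [Am ->]]]; exists (- m), (- r).
  by split; [apply: AN | rewrite opprD mulNr].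
split.
  move=> _ _ [m [r [Am ->]]] [m' [r' [Am' ->]]]; exists (m + m'), (r + r').
  by split; [apply: AD | rewrite mulrDl addrACA].
move=> s _ _ [m [r [Am ->]]]; exists (s * m), (s * r).
by split; [apply: AM | rewrite mulrDr mulrA].
Qed.

Lemma sub_adjoin A x : A `<=` adjoin A x.
Proof. by move=> m Am; exists m, 0; rewrite mul0r addr0. Qed.

Lemma adjoin_elt A x : ideal A -> adjoin A x x.
Proof. by move=> iA; exists 0, 1; rewrite mul1r add0r; split=> //; apply: ideal0. Qed.

Lemma maximal_in_prime A : maximal_in setT A -> prime_in setT A.
Proof.
move=> [iA [A1 Amax]]; split=> //; split=> // x y _ _ Axy.
have [|Ax] := pselect (A x); [by left | right].
have [Ex|] := Amax _ (ideal_adjoin x iA) (@sub_adjoin A x).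
  by case: Ax; rewrite -Ex; apply: adjoin_elt.
move=> Eset; have [m [r [Am E1]]] : adjoin A x 1 by rewrite Eset.
have -> : y = y * m + r * (x * y) by rewrite -[y in LHS]mulr1 E1; ring.
by apply: idealD => //; apply: idealMl.
Qed.

Definition ideal_span (S : set K) : set K :=
  [set z | exists s : seq (K * K), (forall p, p \in s -> S p.2) /\
     z = \sum_(p <- s) p.1 * p.2].

Lemma ideal_span_ideal (S : set K) : ideal (ideal_span S).
Proof.
split=> //; split; first by exists [::]; rewrite big_nil.
split.
  move=> _ [s [sS ->]]; exists [seq (- p.1, p.2) | p <- s]; split.
    by move=> _ /mapP [q qs ->]; exact: sS qs.
  by rewrite big_map -sumrN; apply: eq_bigr => p _; rewrite mulNr.
split.
  move=> _ _ [s [sS ->]] [t [tS ->]]; exists (s ++ t); rewrite big_cat; split=> //.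
  by move=> p; rewrite mem_cat => /orP [/sS | /tS].
move=> c _ _ [s [sS ->]]; exists [seq (c * p.1, p.2) | p <- s]; split.
  by move=> _ /mapP [q qs ->]; exact: sS qs.
by rewrite big_map mulr_sumr; apply: eq_bigr => p _; rewrite mulrA.
Qed.

Lemma sub_ideal_span (S : set K) : S `<=` ideal_span S.
Proof.
move=> x Sx; exists [:: (1, x)]; rewrite big_seq1 mul1r; split=> // p.
by rewrite inE => /eqP ->.
Qed.

Section PrimeAvoidance.
Variables (J : set K) (a : K).
Hypotheses (idealJ : ideal J) (J_expr : forall n, ~ J (a ^+ n)).

Definition avoids_powers (X : set K) := [/\ ideal X, J `<=` X & forall n, ~ X (a ^+ n)].

Lemma avoids_powers_chain_bigcup (F : set (set K)) X0 :
  (forall X x, F X -> X x -> avoids_powers X) -> total_on F subset ->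
  F X0 -> avoids_powers X0 -> avoids_powers (\bigcup_(X in F) X).
Proof.
move=> FA Ftot FX0 [iX0 JX0 _].
split; last 2 first.
- by move=> x Jx; exists X0 => //; apply: JX0.
- by move=> n [X FX Xx]; case: (FA _ _ FX Xx) => _ _ /(_ n).
split=> //; split; first by exists X0 => //; apply: ideal0.
split.
  move=> x [X FX Xx]; exists X => //.
  by case: (FA _ _ FX Xx) => -[_ [_ [XN _]]] _ _; apply: XN.
split.
  move=> x y [X FX Xx] [Y FY Yy].
  have [XY|YX] := Ftot _ _ FX FY.
    by exists Y => //; case: (FA _ _ FY Yy) => iY _ _; apply: idealD => //; apply: XY.
  by exists X => //; case: (FA _ _ FX Xx) => iX _ _; apply: idealD => //; apply: YX.
by move=> c x _ [X FX Xx]; exists X => //; case: (FA _ _ FX Xx) => iX _ _; apply: idealMl.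
Qed.

Lemma maximal_avoids_powers_exists :
  exists A, avoids_powers A /\ forall B, A `<` B -> ~ avoids_powers B.
Proof.
(* Zorn_bigcup also has to accept the empty chain, whose union is set0. *)
pose Q X := avoids_powers X \/ X = set0.
have [A [QA Amax]] : exists A, Q A /\ forall B, A `<` B -> ~ Q B.
  apply: Zorn_bigcup => F FQ Ftot.
  have FA X x : F X -> X x -> avoids_powers X by move=> FX; have [//|->] := FQ _ FX.
  have [[X0 FX0 AX0]|noF] := pselect (exists2 X, F X & avoids_powers X).
    left; exact: (avoids_powers_chain_bigcup FA Ftot FX0 AX0).
  right; apply/seteqP; split=> // x [X FX Xx].
  by apply: noF; exists X => //; apply: FA Xx.
have AJ : avoids_powers J by split.
exists A; split=> [|B AB AB']; last by apply: (Amax B AB); left.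
case: QA => // A0; case: (Amax J); last by left.
by rewrite A0; split=> // /(_ 0); apply; apply: ideal0.
Qed.

Lemma maximal_avoids_powers_prime A :
  avoids_powers A -> (forall B, A `<` B -> ~ avoids_powers B) -> prime_in setT A.
Proof.
move=> [iA JA A_expr] Amax; split=> //; split; first by move: (A_expr 0%N); rewrite expr0.
move=> x y _ _ Axy; apply: contrapT => /not_orP [Ax Ay].
have adjoin_expr z : ~ A z -> exists n, adjoin A z (a ^+ n).
  move=> Az; apply: contrapT => /forallNP z_expr; apply: (Amax (adjoin A z)).
    by split; [apply: sub_adjoin | move=> /(_ z (adjoin_elt z iA))].
  by split; [apply: ideal_adjoin | move=> w /JA; apply: sub_adjoin | ].
have [n [m1 [r1 [Am1 E1]]]] := adjoin_expr x Ax.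
have [k [m2 [r2 [Am2 E2]]]] := adjoin_expr y Ay.
apply: (A_expr (n + k)%N); rewrite exprD E1 E2.
have -> : (m1 + r1 * x) * (m2 + r2 * y) =
    m1 * (m2 + r2 * y) + (m2 * (r1 * x) + r1 * r2 * (x * y)) by ring.
exact: idealD iA (idealMr _ iA Am1) (idealD iA (idealMr _ iA Am2) (idealMl _ iA Axy)).
Qed.

Theorem prime_avoiding_powers : exists P, [/\ prime_in setT P, J `<=` P & ~ P a].
Proof.
have [A [[iA JA A_expr] Amax]] := maximal_avoids_powers_exists.
exists A; split=> //; last by move: (A_expr 1%N); rewrite expr1.
exact: maximal_avoids_powers_prime.
Qed.

End PrimeAvoidance.
End Ideals.

Section FiniteCover.
Variables (T I : Type) (F : I -> set T).

Definition fin_covered (X : set T) :=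
  exists n (g : nat -> I), X `<=` [set P | exists k, (k < n)%N /\ F (g k) P].

Lemma fin_covered_sub X Y : X `<=` Y -> fin_covered Y -> fin_covered X.
Proof. by move=> XY [n [g Yg]]; exists n, g => P /XY /Yg. Qed.

Lemma fin_covered1 X i : X `<=` F i -> fin_covered X.
Proof. by move=> XF; exists 1%N, (fun=> i) => P /XF FP; exists 0%N. Qed.

Lemma fin_coveredU X Y : fin_covered X -> fin_covered Y -> fin_covered (X `|` Y).
Proof.
move=> [n1 [g1 Xg1]] [n2 [g2 Yg2]].
exists (n1 + n2)%N, (fun k => if (k < n1)%N then g1 k else g2 (k - n1)%N).
move=> P [/Xg1 [k [kn FP]]|/Yg2 [k [kn FP]]].
  by exists k; rewrite kn ltn_addr.
by exists (n1 + k)%N; rewrite ltn_add2l kn ltnNge leq_addr /= addKn.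
Qed.

Lemma fin_covered_bigcup_seq (i0 : I) (U : eqType) (xs : seq U) (G : U -> set T) :
  (forall x, x \in xs -> fin_covered (G x)) ->
  fin_covered [set P | exists2 x, x \in xs & G x P].
Proof.
elim: xs => [|x xs IHxs] xsG; first by exists 0%N, (fun=> i0) => P [].
apply: (@fin_covered_sub _ (G x `|` [set P | exists2 y, y \in xs & G y P])).
  by move=> P [y]; rewrite inE => /orP [/eqP -> | yxs Gy]; [left | right; exists y].
apply: fin_coveredU; first by apply: xsG; rewrite mem_head.
by apply: IHxs => y yxs; apply: xsG; rewrite inE yxs orbT.
Qed.

End FiniteCover.

Section Zariski.
Variable R : idomainType.
Implicit Types (I : set R) (l : seq R) (a : R).
Local Notation Spec := (@Spec R).

Definition zero_locus I : set (set R) := [set P | Spec P /\ I `<=` P].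
Definition basic_open I : set (set R) := [set P | Spec P /\ ~ I `<=` P].
Definition basic_open_elt a : set (set R) := [set P | Spec P /\ ~ P a].

Lemma zero_locusE I : zero_locus I = Spec `\` basic_open I.
Proof.
apply/seteqP; split=> P [SP IP]; split=> //; first by case.
by apply: contrapT => nIP; apply: IP.
Qed.

Lemma gen_ideal_sub l (P : set R) :
  ideal_in setT P -> (forall x, x \in l -> P x) -> gen_ideal l `<=` P.
Proof.
move=> iP lP _ [c ->]; apply: ideal_sum => // i _.
by apply: idealMl => //; apply/lP/mem_nth.
Qed.

Lemma mem_gen_ideal l x : x \in l -> gen_ideal l x.
Proof.
move=> xl; exists (fun i => (i == index x l)%:R).
have xi : (index x l < size l)%N by rewrite index_mem.
rewrite (bigD1 (Ordinal xi)) //= eqxx mul1r nth_index // big1 ?addr0 // => i ne.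
rewrite (_ : (i == index x l :> nat) = false) ?mul0r //.
by apply: contraNF ne => /eqP e; apply/eqP/val_inj.
Qed.

Lemma basic_open_gen_ideal l :
  basic_open (gen_ideal l) `<=` [set P | exists2 x, x \in l & basic_open_elt x P].
Proof.
move=> P [SP lP]; apply: contrapT => nlP.
apply: lP; apply: gen_ideal_sub; first by case: SP.
by move=> x xl; apply: contrapT => Px; apply: nlP; exists x.
Qed.

Lemma basic_open_elt_fin_covered (J : Type) (F : J -> set (set R)) (j0 : J) a :
  (forall j, zariski_open (F j)) -> basic_open_elt a `<=` \bigcup_j F j ->
  fin_covered F (basic_open_elt a).
Proof.
move=> /choice [A FA] aF; pose S := \bigcup_j A j.
have [[n [s [sS a_n]]]|span_a] := pselect (exists n, ideal_span S (a ^+ n)).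
  apply: (@fin_covered_sub _ _ _ _
    [set P | exists2 q, q \in map snd s & basic_open_elt q P]).
    move=> P [SP Pa]; apply: contrapT => sP; apply: (prime_expr_notin (n := n) SP Pa).
    rewrite a_n big_seq; apply: ideal_sum; first by case: SP.
    move=> p ps; apply: idealMl; first by case: SP.
    by apply: contrapT => Pp; apply: sP; exists p.2; first exact: map_f.
  apply: (fin_covered_bigcup_seq j0) => _ /mapP [p ps ->].
  have [j _ Ajp] := sS p ps.
  by apply: (fin_covered1 (i := j)) => P [SP Pp]; rewrite FA; split=> // /(_ _ Ajp).
have /(prime_avoiding_powers (ideal_span_ideal S)) [P [SP SpanP Pa]] :
    forall n, ~ ideal_span S (a ^+ n) by move=> n Sa; apply: span_a; exists n.
have [j _] := aF P (conj SP Pa).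
by rewrite FA => -[_ []] x Ajx; apply/SpanP/sub_ideal_span; exists j.
Qed.

(* Nonemptiness provides an index j0: zariski_compact asks for some g : nat -> J
   even when n = 0. *)
Lemma zariski_compact_basic_open_gen l :
  basic_open (gen_ideal l) !=set0 -> zariski_compact (basic_open (gen_ideal l)).
Proof.
move=> [P0 DP0] J F Fo cover; have [j0 _ _] := cover P0 DP0.
apply: (fin_covered_sub (basic_open_gen_ideal (l := l))).
apply: (fin_covered_bigcup_seq j0) => a al.
apply: basic_open_elt_fin_covered => // P [SP Pa]; apply: cover; split=> // lP.
exact/Pa/lP/mem_gen_ideal.
Qed.

Lemma inverse_open_zero_locus I : fg_ideal I -> inverse_open (zero_locus I).
Proof.
move=> [l ->]; rewrite zero_locusE.
have [DP0|D0] := pselect (basic_open (gen_ideal l) !=set0).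
  apply: gen_basic; exists (basic_open (gen_ideal l)); split=> //.
  - by move=> P [].
  - by exists (gen_ideal l).
  - exact: zariski_compact_basic_open_gen.
rewrite (_ : basic_open _ = set0) ?setD0; first exact: gen_full.
by apply/seteqP; split=> // P DP; apply: D0; exists P.
Qed.

Lemma inverse_closed_setD (U : set (set R)) :
  U `<=` Spec -> inverse_open U -> inverse_closed (Spec `\` U).
Proof. by move=> US oU; split; [move=> P [] | rewrite setDD setIidr]. Qed.

End Zariski.

Section Critical.
Variable R : idomainType.
Local Notation Spec := (@Spec R).

Definition escapes_squares (I : set R) :=
  forall N, is_maximal N -> ~ I `<=` ideal_mul N N.

Definition noncritical_locus : set (set R) :=
  \bigcup_(I in [set I | fg_ideal I /\ escapes_squares I]) zero_locus I.

Lemma noncritical_locus_sub : noncritical_locus `<=` Spec.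
Proof. by move=> P [I _ []]. Qed.

Lemma inverse_open_noncritical_locus : inverse_open noncritical_locus.
Proof.
rewrite /noncritical_locus bigcup_set_type; apply: gen_union => -[I /= /set_mem [fgI _]].
exact: inverse_open_zero_locus.
Qed.

Lemma CritE : @Crit R = @Max R `&` (Spec `\` noncritical_locus).
Proof.
apply/seteqP; split=> M.
  move=> [maxM critM]; split=> //; split; first exact: maximal_in_prime.
  by move=> [I [fgI escI] [_ IM]]; have [N [maxN IN]] := critM I fgI IM; apply: (escI N).
move=> [maxM [_ noncritM]]; split=> // I fgI IM.
apply: contrapT => noN; apply: noncritM; exists I.
  by split=> // N maxN IN; apply: noN; exists N.
by split=> //; apply: maximal_in_prime.
Qed.

End Critical.

(* Closedness holds in every domain. *)
Theorem proposition2p4 (R : idomainType) :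
  @almost_dedekind R -> closed_in_invMax (@Crit R).
Proof.
move=> _; exists (@Spec R `\` @noncritical_locus R); split; last exact: CritE.
apply: inverse_closed_setD.
- exact: noncritical_locus_sub.
- exact: inverse_open_noncritical_locus.
Qed.
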